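(* $M^L(6)\le 15$.
   Context: $\mathbb{F}=\{0,1\}$. The binary $n$-dimensional hypercube $\mathbb{F}^n$ is the graph on $\mathbb{F}^n$ where two words are adjacent iff their Hamming distance is $1$. For a nonempty $C\subseteq\mathbb{F}^n$, $I(\mathbf{x})=N[\mathbf{x}]\cap C$ with $N[\mathbf{x}]$ the words at Hamming distance $\le1$ from $\mathbf{x}$. $C$ is a local identifying code if $I(\mathbf{x})\ne\emptyset$ for all $\mathbf{x}$ and $I(\mathbf{x})\ne I(\mathbf{y})$ for all adjacent $\mathbf{x},\mathbf{y}$. $M^L(n)$ is the minimum cardinality of a local identifying code in $\mathbb{F}^n$. *)

From mathcomp Require Import all_boot.
Set Implicit Arguments. Unset Strict Implicit. Unset Printing Implicit Defensive.

(* Words of the binary n-dimensional hypercube F^n, F = {0,1} = bool. *)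
Definition word (n : nat) := {ffun 'I_n -> bool}.

Definition hdist n (x y : word n) : nat := #|[set i : 'I_n | x i != y i]|.

Definition closed_nbhd n (x : word n) : {set word n} :=
  [set y : word n | hdist x y <= 1].

Definition Iset n (C : {set word n}) (x : word n) : {set word n} :=
  closed_nbhd x :&: C.

Definition local_id_code n (C : {set word n}) : bool :=
  [&& C != set0,
      [forall x : word n, Iset C x != set0] &
      [forall x : word n, forall y : word n,
         (hdist x y == 1) ==> (Iset C x != Iset C y)]].

(* M^L(n): minimum cardinality of a local identifying code in F^n
   (if none exists, the value defaults to 2^n + 1 = #|word n|.+1). *)
Definition ML (n : nat) : nat :=
  \big[minn/#|{: word n}|.+1]_(C : {set word n} | local_id_code C) #|C|.

From mathcomp Require Import all_boot all_order.
Import Order.TTheory.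

Set Implicit Arguments.
Unset Strict Implicit.
Unset Printing Implicit Defensive.

(* Identify F^n with the integers 0 <= k < 2^n, coordinate i being bit i of k.
   Being a local identifying code is then a finite property of a list of
   integers, which for the explicit 15-word code below is decided by
   evaluation. *)

Lemma ML_le_card n (C : {set word n}) : local_id_code C -> ML n <= #|C|.
Proof. by move=> hC; apply: (@bigmin_le_cond _ nat). Qed.

Definition bits n k : word n := [ffun i : 'I_n => odd (k %/ 2 ^ i)].

Definition bitdist n k l : nat :=
  count (fun i => odd (k %/ 2 ^ i) != odd (l %/ 2 ^ i)) (iota 0 n).

Lemma hdist_bits n k l : hdist (bits n k) (bits n l) = bitdist n k l.
Proof.
rewrite /hdist /bitdist cardsE cardE /enum_mem size_filter -enumT -val_enum_ord.
by rewrite count_map; apply: eq_count => i /=; rewrite unfold_in !ffunE.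
Qed.

Lemma odd_divn_exp2_inj n k l : k < 2 ^ n -> l < 2 ^ n ->
  (forall i, i < n -> odd (k %/ 2 ^ i) = odd (l %/ 2 ^ i)) -> k = l.
Proof.
elim: n k l => [|n IHn] k l; first by rewrite !ltnS !leqn0 => /eqP-> /eqP->.
rewrite expnS => hk hl eq_bits.
have eq_odd : odd k = odd l by have := eq_bits 0 isT; rewrite !divn1.
rewrite -[k]odd_double_half -[l]odd_double_half eq_odd; congr (_ + _.*2).
apply: IHn; rewrite -?divn2.
- by rewrite ltn_divLR // mulnC.
- by rewrite ltn_divLR // mulnC.
- by move=> i lt_in; rewrite -!divnMA -expnS; apply: eq_bits.
Qed.

Lemma bits_inj n k l : k < 2 ^ n -> l < 2 ^ n -> bits n k = bits n l -> k = l.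
Proof.
move=> hk hl eq_kl; apply: (odd_divn_exp2_inj hk hl) => i lt_in.
by have /ffunP/(_ (Ordinal lt_in)) := eq_kl; rewrite !ffunE.
Qed.

Lemma bits_surj n (x : word n) : exists2 k, k < 2 ^ n & x = bits n k.
Proof.
pose f (k : 'I_(2 ^ n)) := bits n k.
have inj_f : injective f by move=> a b /bits_inj eq_ab; apply/val_inj/eq_ab.
have /eqP im_f : f @: setT == setT.
  rewrite eqEcard subsetT /= cardsT card_imset // cardsT.
  by rewrite card_ffun card_bool !card_ord.
have /imsetP[k _ ->] : x \in f @: setT by rewrite im_f inE.
by exists k.
Qed.

Definition code_of n (S : seq nat) : {set word n} := [set x in map (bits n) S].

Lemma card_code_of n S :
  uniq S -> all (fun k => k < 2 ^ n) S -> #|code_of n S| = size S.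
Proof.
move=> uS /allP S_lt; rewrite cardsE (card_uniqP _) ?size_map //.
by rewrite map_inj_in_uniq // => k l /S_lt hk /S_lt hl; apply: bits_inj.
Qed.

Lemma mem_Iset_code_of n S k m : m \in S ->
  (bits n m \in Iset (code_of n S) (bits n k)) = (bitdist n k m <= 1).
Proof.
by move=> mS; rewrite /Iset in_setI inE hdist_bits inE map_f ?andbT.
Qed.

Definition bit_dominating n S : bool :=
  all (fun k => has (fun m => bitdist n k m <= 1) S) (iota 0 (2 ^ n)).

Definition bit_separating n S : bool :=
  all (fun k => all (fun l => (bitdist n k l == 1) ==>
         has (fun m => (bitdist n k m <= 1) != (bitdist n l m <= 1)) S)
       (iota 0 (2 ^ n)))
    (iota 0 (2 ^ n)).

Lemma code_of_local_id n S : S != [::] ->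
  bit_dominating n S -> bit_separating n S -> local_id_code (code_of n S).
Proof.
case: S => [|m0 S] // _ /allP dom /allP sep; apply/and3P; split.
- by apply/set0Pn; exists (bits n m0); rewrite inE mem_head.
- apply/forallP => x; have [k hk ->] := bits_surj x.
  have /dom/hasP[m mS near_km] : k \in iota 0 (2 ^ n) by rewrite mem_iota.
  by apply/set0Pn; exists (bits n m); rewrite mem_Iset_code_of.
- apply/forallP => x; apply/forallP => y.
  have [k hk ->] := bits_surj x; have [l hl ->] := bits_surj y.
  rewrite hdist_bits; apply/implyP => adj_kl.
  have in_iota j : j < 2 ^ n -> j \in iota 0 (2 ^ n) by rewrite mem_iota.
  have /sep/allP/(_ l (in_iota l hl)) := in_iota k hk.
  move=> /implyP/(_ adj_kl)/hasP[m mS sep_m].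
  by apply: contra sep_m => /eqP eq_I; rewrite -!(mem_Iset_code_of _ _ mS) eq_I.
Qed.

Definition code15 : seq nat :=
  [:: 2; 5; 10; 14; 20; 25; 32; 36; 37; 51; 52; 55; 57; 59; 63].

Theorem mainTheorem9 : ML 6 <= 15.
Proof.
have <- : #|code_of 6 code15| = 15 by rewrite card_code_of.
by apply/ML_le_card/code_of_local_id; vm_compute.
Qed.
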